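(* Let $\rho$ be a locally absolutely continuous function quasi-norm with the Fatou property over a $\sigma$-finite measure space $(\Omega,\Sigma,\mu)$, and let $(\Theta,\mathcal{T},\nu)$ be another $\sigma$-finite measure space. Let $f\colon\Omega\times\Theta\to[0,\infty]$ and $g\colon\Theta\times\Omega\to[0,\infty]$ be measurable with respect to the product $\sigma$-algebras. Then the functions $\Theta\to[0,\infty]$ given by $\theta\mapsto\rho(f(\cdot,\theta))$ and $\theta\mapsto\rho(g(\theta,\cdot))$ are measurable.
   Context: $L_0^+(\mu)$: measurable functions $\Omega\to[0,\infty]$ modulo a.e. equality. A function quasi-norm is $\rho\colon L_0^+(\mu)\to[0,\infty]$ with (F1) $\rho(tf)=t\rho(f)$, $t\ge0$; (F2) $f\le g$ a.e. $\Rightarrow\rho(f)\le\rho(g)$; (F3) $\rho(\chi_E)<\infty$ if $\mu(E)<\infty$; (F4) for all $E$ with $\mu(E)<\infty$ and $\varepsilon>0$ there is $\delta>0$ with $\mu(A)\le\varepsilon$ whenever $A\subseteq E$ measurable and $\rho(\chi_A)\le\delta$; (F5) $\rho(f+g)\le\kappa(\rho(f)+\rho(g))$. Fatou property: $\rho(\lim f_n)\le\lim\rho(f_n)$ for non-decreasing $(f_n)$. $h\in L_0^+(\mu)$ with $\rho(h)<\infty$ is absolutely continuous if $\lim_n\rho(f_n)=\rho(\lim_nf_n)$ for every non-increasing $(f_n)$ in $L_0^+(\mu)$ with $f_1\le h$; $\rho$ is locally absolutely continuous if $\chi_E$ is absolutely continuous for every $E\in\Sigma$ with $\mu(E)<\infty$.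 *)

From HB Require Import structures.
From mathcomp Require Import all_boot all_order all_algebra.
From mathcomp Require Import all_classical all_reals all_analysis measurable_realfun.
Set Implicit Arguments. Unset Strict Implicit. Unset Printing Implicit Defensive.
Import Order.TTheory GRing.Theory Num.Theory.
Local Open Scope classical_set_scope.
Local Open Scope ring_scope.
Local Open Scope ereal_scope.

Section FQN.
Context {d : measure_display} {T : measurableType d} {R : realType}.
Variable mu : {measure set T -> \bar R}.

(* L_0^+(mu): measurable functions T -> [0,+oo]; a.e.-classes are handled by
   requiring rho to be invariant under a.e. equality. *)
Definition L0p (f : T -> \bar R) : Prop :=
  measurable_fun setT f /\ (forall x, 0 <= f x).

Definition eindic (E : set T) : T -> \bar R := fun x => (\1_E x)%:E.

Definition is_function_quasinorm (rho : (T -> \bar R) -> \bar R) : Prop :=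
  (forall f g, L0p f -> L0p g -> {ae mu, forall x, f x = g x} -> rho f = rho g) /\
  (forall f, L0p f -> 0 <= rho f) /\
  (forall (t : R) f, (0 <= t)%R -> L0p f ->
      rho (fun x => t%:E * f x) = t%:E * rho f) /\
  (forall f g, L0p f -> L0p g -> {ae mu, forall x, f x <= g x} -> rho f <= rho g) /\
  (forall E, measurable E -> mu E < +oo -> rho (eindic E) < +oo) /\
  (forall E, measurable E -> mu E < +oo -> forall eps : R, (0 < eps)%R ->
      exists delta : R, (0 < delta)%R /\
        forall A, measurable A -> A `<=` E -> rho (eindic A) <= delta%:E ->
          mu A <= eps%:E) /\
  (exists kappa : R, (1 <= kappa)%R /\
     forall f g, L0p f -> L0p g ->
       rho (fun x => f x + g x) <= kappa%:E * (rho f + rho g)).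

Definition has_Fatou (rho : (T -> \bar R) -> \bar R) : Prop :=
  forall F : nat -> T -> \bar R, (forall n, L0p (F n)) ->
    (forall x, {homo (fun n => F n x) : n m / (n <= m)%N >-> n <= m}) ->
    rho (fun x => limn (fun n => F n x)) <= limn (fun n => rho (F n)).

Definition abs_cont (rho : (T -> \bar R) -> \bar R) (h : T -> \bar R) : Prop :=
  rho h < +oo /\
  forall F : nat -> T -> \bar R, (forall n, L0p (F n)) ->
    (forall x, {homo (fun n => F n x) : n m / (n <= m)%N >-> m <= n}) ->
    {ae mu, forall x, F 0%N x <= h x} ->
    limn (fun n => rho (F n)) = rho (fun x => limn (fun n => F n x)).

Definition loc_abs_cont (rho : (T -> \bar R) -> \bar R) : Prop :=
  forall E, measurable E -> mu E < +oo -> abs_cont rho (eindic E).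

End FQN.

(* Approximating [f] from below by simple functions supported on sets of
   finite measure, the Fatou property reduces the claim to the maps
   [theta |-> rho (sum_i a_i 1_(D_i)(., theta) 1_E)] with [D_i] measurable
   and [mu E < oo].  If every [D_i] is patterned, i.e. its [theta]-sections
   depend on [theta] only through the membership of [theta] in finitely many
   measurable sets, this map factors measurably through that membership
   pattern.  Patterned sets form a ring generating the product sigma-algebra,
   and the class of sets allowed in one slot [D_i] is closed under increasing
   unions (Fatou property) and decreasing intersections (local absolute
   continuity, the simple functions being dominated by a multiple of [1_E]),
   so the monotone class theorem frees the [D_i] one slot at a time.  The
   statement for [g] follows by swapping the coordinates. *)

From HB Require Import structures.
From mathcomp Require Import all_boot all_order all_algebra.
From mathcomp Require Import all_classical all_reals all_analysis measurable_realfun.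
Import Order.TTheory GRing.Theory Num.Theory HBNNSimple.
Set Implicit Arguments.
Unset Strict Implicit.
Unset Printing Implicit Defensive.

Local Open Scope classical_set_scope.
Local Open Scope ring_scope.
Local Open Scope ereal_scope.

Section quasinorm_limits.
Context (R : realType) (d : measure_display) (Omega : measurableType d).
Variables (mu : {measure set Omega -> \bar R}) (rho : (Omega -> \bar R) -> \bar R).
Hypothesis rho_qn : is_function_quasinorm mu rho.

Lemma rho_le (f g : Omega -> \bar R) : L0p f -> L0p g ->
  (forall x, f x <= g x) -> rho f <= rho g.
Proof.
move=> Lf Lg fg; have [_ [_ [_ [rho_ae_le _]]]] := rho_qn.
by apply: rho_ae_le => //; exact: aeW.
Qed.

Lemma rhoZ (t : R) (f : Omega -> \bar R) : (0 <= t)%R -> L0p f ->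
  rho (fun x => t%:E * f x) = t%:E * rho f.
Proof. by have [_ [_ [homogeneous _]]] := rho_qn; exact: homogeneous. Qed.

Lemma L0pZ (t : R) (f : Omega -> \bar R) : (0 <= t)%R -> L0p f ->
  L0p (fun x => t%:E * f x).
Proof.
move=> t0 [mf f0]; split; first exact: measurable_funeM.
by move=> x; rewrite mule_ge0.
Qed.

Lemma cvg_rho_nondecreasing (F : nat -> Omega -> \bar R) (G : Omega -> \bar R) :
  has_Fatou rho -> (forall n, L0p (F n)) -> L0p G ->
  (forall x, nondecreasing_seq (F ^~ x)) -> (forall x, F ^~ x @ \oo --> G x) ->
  (fun n => rho (F n)) @ \oo --> rho G.
Proof.
move=> fatou LF LG ndF cvgF.
have nd_rhoF : nondecreasing_seq (fun n => rho (F n)).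
  by move=> n m nm; apply: rho_le => // x; exact: ndF.
have limF : (fun x => limn (F ^~ x)) = G by apply: funext => x; exact: cvg_lim.
suff <- : limn (fun n => rho (F n)) = rho G by exact: ereal_nondecreasing_is_cvgn.
apply/eqP; rewrite eq_le; apply/andP; split; last by rewrite -{1}limF; exact: fatou.
apply: lime_le; first exact: ereal_nondecreasing_is_cvgn.
apply: nearW => n; apply: rho_le => // x; rewrite -limF.
apply: lime_ge; first exact: ereal_nondecreasing_is_cvgn.
by near=> m; apply: ndF; near: m; exists n.
Unshelve. all: by end_near.
Qed.

(* Scaling by [c^-1] reduces domination by [c * 1_E] to the definition of
   absolute continuity, which only speaks of [1_E]. *)
Lemma cvg_rho_nonincreasing (E : set Omega) (c : R) (F : nat -> Omega -> \bar R)
    (G : Omega -> \bar R) :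
  loc_abs_cont mu rho -> measurable E -> mu E < +oo -> (0 < c)%R ->
  (forall n, L0p (F n)) -> L0p G ->
  (forall x, nonincreasing_seq (F ^~ x)) ->
  (forall x, F 0%N x <= c%:E * eindic E x) -> (forall x, F ^~ x @ \oo --> G x) ->
  (fun n => rho (F n)) @ \oo --> rho G.
Proof.
move=> ac mE muE c0 LF LG niF F0 cvgF.
have c'0 : (0 <= c^-1)%R by rewrite invr_ge0 ltW.
have c_neq0 : c != 0%R by rewrite gt_eqF.
have cK (f : Omega -> \bar R) : (fun x => c%:E * (c^-1%:E * f x)) = f.
  by apply: funext => x; rewrite muleA -EFinM divff ?mul1e.
pose F' n x := c^-1%:E * F n x.
have LF' n : L0p (F' n) by apply: L0pZ.
have rhoF n : rho (F n) = c%:E * rho (F' n) by rewrite -rhoZ ?ltW // /F' cK.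
have rhoG : rho G = c%:E * rho (fun x => c^-1%:E * G x).
  by rewrite -rhoZ ?ltW ?cK //; exact: L0pZ.
have niF' x : nonincreasing_seq (F' ^~ x).
  by move=> n m nm; apply: lee_wpmul2l; [rewrite lee_fin|exact: niF].
have F'0 x : F' 0%N x <= eindic E x.
  apply: (@le_trans _ _ (c^-1%:E * (c%:E * eindic E x))).
    by apply: lee_wpmul2l; rewrite ?lee_fin.
  by rewrite muleA -EFinM mulVf // mul1r.
have limF' : (fun x => limn (F' ^~ x)) = fun x => c^-1%:E * G x.
  by apply: funext => x; apply: cvg_lim => //; exact: cvgeZl.
have [_ ac_lim] := ac E mE muE.
have := ac_lim F' LF' niF' (aeW _ F'0); rewrite limF' => rhoF'E.
rewrite (funext rhoF) rhoG; apply: cvgeZl => //; rewrite -rhoF'E.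
apply: ereal_nonincreasing_is_cvgn => n m nm; apply: rho_le => // x; exact: niF'.
Qed.
End quasinorm_limits.

Lemma measurable_fun_mem (d : measure_display) (T : measurableType d) (B : set T) :
  measurable B -> measurable_fun setT (fun t => t \in B).
Proof.
move=> mB; apply: (measurable_fun_bool true); rewrite setTI.
rewrite (_ : _ @^-1` _ = B) //.
by apply/seteqP; split => t /=; [exact: set_mem|exact: mem_set].
Qed.

Section patterned_sets.
Context (d1 d2 : measure_display) (Omega : measurableType d1) (Theta : measurableType d2).

Definition pattern (Bs : seq (set Theta)) (th : Theta) : seq bool :=
  [seq th \in B | B <- Bs].

Definition seq_measurable (Bs : seq (set Theta)) :=
  forall i, measurable (nth set0 Bs i).

Lemma pattern_cat Bs Cs th : pattern (Bs ++ Cs) th = pattern Bs th ++ pattern Cs th.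
Proof. exact: map_cat. Qed.

Lemma size_pattern Bs th : size (pattern Bs th) = size Bs.
Proof. exact: size_map. Qed.

Lemma seq_measurable_cat Bs Cs :
  seq_measurable Bs -> seq_measurable Cs -> seq_measurable (Bs ++ Cs).
Proof. by move=> mB mC i; rewrite nth_cat; case: ifP. Qed.

Lemma measurable_fun_pattern (d : measure_display) (U : measurableType d)
    Bs (h : seq bool -> U) :
  seq_measurable Bs -> measurable_fun setT (h \o pattern Bs).
Proof.
elim: Bs h => [|B Bs IH] h mBs; first exact: measurable_cst (h [::]).
have -> : h \o pattern (B :: Bs) =
    fun th => if th \in B then h (true :: pattern Bs th) else h (false :: pattern Bs th).
  by apply: funext => th /=; case: (th \in B).
have mBs' : seq_measurable Bs by move=> i; exact: (mBs i.+1).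
apply: measurable_fun_ifT; first exact: measurable_fun_mem (mBs 0%N).
  exact: (IH (fun p => h (true :: p))).
exact: (IH (fun p => h (false :: p))).
Qed.

Definition patterned : set (set (Omega * Theta)) :=
  [set X | exists Bs (S : seq bool -> set Omega), [/\ seq_measurable Bs,
     forall p, measurable (S p) & X = [set z | S (pattern Bs z.2) z.1]]].

Lemma patterned_op (op : set Omega -> set Omega -> set Omega) X Y :
  (forall A B, measurable A -> measurable B -> measurable (op A B)) ->
  patterned X -> patterned Y ->
  patterned [set z | op [set x | X (x, z.2)] [set x | Y (x, z.2)] z.1].
Proof.
move=> mop [Bs [S [mBs mS ->]]] [Cs [T [mCs mT ->]]].
exists (Bs ++ Cs), (fun p => op (S (take (size Bs) p)) (T (drop (size Bs) p))).
split; [exact: seq_measurable_cat|by move=> p; exact: mop|].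
apply/seteqP; split => z /=; rewrite pattern_cat take_size_cat ?size_pattern //;
  by rewrite drop_size_cat ?size_pattern.
Qed.

Lemma patterned_setring : setring patterned.
Proof.
split.
- by exists [::], (fun _ => set0); split => // i; rewrite nth_nil.
- move=> X Y pX pY; have := patterned_op (@measurableU _ Omega) pX pY.
  by congr patterned; apply/seteqP; split => -[x y].
- move=> X Y pX pY; have := patterned_op (@measurableD _ Omega) pX pY.
  by congr patterned; apply/seteqP; split => -[x y].
Qed.

Lemma patterned_setX (A : set Omega) (B : set Theta) :
  measurable A -> measurable B -> patterned (A `*` B).
Proof.
move=> mA mB; exists [:: B], (fun p => if p is true :: _ then A else set0).
split; [by case=> [|i] //=; rewrite nth_nil|by move=> [|[] p]|].
apply/seteqP; split => -[x y] /=; first by move=> [Ax By]; rewrite mem_set.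
by case: ifPn => // /set_mem.
Qed.

Lemma measurable_sub_sigma_ring_patterned (X : set (Omega * Theta)) :
  measurable X -> <<sr patterned>> X.
Proof.
rewrite measurable_prod_measurableType; apply: smallest_sub.
  have [sr0 srD srU] := smallest_sigma_ring patterned.
  split => // A srA; apply: srD => //; apply: sub_g_sigma_ring.
  by exists [::], (fun _ => setT); split => // i; rewrite nth_nil.
by move=> _ [A mA] [B mB] <-; apply: sub_g_sigma_ring; exact: patterned_setX.
Qed.

Lemma measurable_ysection_patterned th (X : set (Omega * Theta)) :
  <<sr patterned>> X -> measurable (ysection X th).
Proof.
move: X; apply: (smallest_sub (X := [set Y | measurable (ysection Y th)])).
  split => /=.
  - by rewrite ysection0.
  - by move=> A B mA mB; rewrite /= ysectionD; exact: measurableD.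
  - by move=> F mF; rewrite ysection_bigcup; exact: bigcupT_measurable.
by move=> _ [Bs [S [_ mS ->]]]; rewrite /= ysectionE; exact: (mS (pattern Bs th)).
Qed.

End patterned_sets.

Arguments patterned {d1 d2 Omega Theta}.
Arguments patterned_setring {d1 d2 Omega Theta}.

Lemma le_indic_at (T1 T2 : Type) (R : numDomainType) (A : set T1) (B : set T2) x y :
  (A x -> B y) -> (\1_A x <= \1_B y :> R)%R.
Proof.
move=> AB; rewrite !indicE; have [/set_mem/AB/mem_set -> //|_] := boolP (x \in A).
by rewrite ler0n.
Qed.

Lemma indic_le1 (T : Type) (R : numDomainType) (A : set T) x : (\1_A x <= 1 :> R)%R.
Proof. by rewrite indicE; case: (x \in A); rewrite ?ler01 ?lexx. Qed.

Lemma near_nondecreasing_bigcup (T : Type) (F : (set T)^nat) z : nondecreasing_seq F ->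
  \forall m \near \oo, F m z <-> (\bigcup_i F i) z.
Proof.
move=> ndF; have [[j _ Fjz]|Uz] := pselect ((\bigcup_i F i) z).
  near=> m; split=> [Fmz|_]; first by exists m.
  suff : F j `<=` F m by apply.
  by apply/subsetPset/ndF; near: m; exists j.
by apply: nearW => m; split=> [Fmz|/Uz//]; exists m.
Unshelve. all: by end_near.
Qed.

Lemma near_nonincreasing_bigcap (T : Type) (F : (set T)^nat) z : nonincreasing_seq F ->
  \forall m \near \oo, F m z <-> (\bigcap_i F i) z.
Proof.
move=> niF; have [Iz|/existsNP[j /= Fjz]] := pselect (forall i, F i z).
  by apply: nearW => m; split=> // _ i _; exact: Iz.
near=> m; split=> [Fmz|Iz]; last by exfalso; apply: Fjz; exact: Iz.
suff : F m `<=` F j by move/(_ _ Fmz).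
by apply/subsetPset/niF; near: m; exists j.
Unshelve. all: by end_near.
Qed.

Section simple_sections.
Context (R : realType) (d1 d2 : measure_display) (Omega : measurableType d1)
  (Theta : measurableType d2).

Definition simple_section (E : set Omega) (a : nat -> R)
    (D : nat -> set (Omega * Theta)) (n : nat) (th : Theta) : Omega -> \bar R :=
  fun x => ((\sum_(i < n) a i * \1_(D i) (x, th)) * \1_E x)%:E.

Lemma sum_indic_patterned (a : nat -> R) (D : nat -> set (Omega * Theta)) n :
  (forall i, (i < n)%N -> patterned (D i)) ->
  exists Bs (h : seq bool -> Omega -> R), seq_measurable Bs /\
    forall th x, (\sum_(i < n) a i * \1_(D i) (x, th))%R = h (pattern Bs th) x.
Proof.
elim: n => [_|n IH pD].
  by exists [::], (fun _ _ => 0%R); split=> [i|th x]; rewrite ?nth_nil ?big_ord0.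
have [Bs [h [mBs hE]]] := IH (fun i ilt => pD i (ltnW ilt)).
have [Cs [S [mCs _ DnE]]] := pD n (ltnSn n).
exists (Bs ++ Cs), (fun p x => h (take (size Bs) p) x +
  a n * \1_(S (drop (size Bs) p)) x)%R.
split=> [|th x]; first exact: seq_measurable_cat.
rewrite big_ord_recr /= hE pattern_cat take_size_cat ?size_pattern //.
by rewrite drop_size_cat ?size_pattern // DnE.
Qed.

Variables (mu : {measure set Omega -> \bar R}) (rho : (Omega -> \bar R) -> \bar R).
Hypotheses (rho_qn : is_function_quasinorm mu rho) (rho_fatou : has_Fatou rho)
  (rho_ac : loc_abs_cont mu rho).
Variables (E : set Omega) (a : nat -> R) (n : nat).
Hypotheses (mE : measurable E) (muE : mu E < +oo) (a_ge0 : forall i, (0 <= a i)%R).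

Lemma L0p_simple_section D th : (forall i, <<sr patterned>> (D i)) ->
  L0p (simple_section E a D n th).
Proof.
move=> srD; split=> [|x]; last first.
  by rewrite lee_fin mulr_ge0 ?sumr_ge0 // => i _; rewrite mulr_ge0.
apply/measurable_EFinP; apply: measurable_funM; last exact: measurable_indic.
apply: measurable_sum => i; apply: measurable_funM; first exact: measurable_cst.
rewrite (_ : (fun x => _) = \1_(ysection (D i) th)).
  exact/measurable_indic/measurable_ysection_patterned.
by apply/funext => x; rewrite !indicE mem_ysection.
Qed.

Lemma simple_section_le D D' th x : (forall i, D i (x, th) -> D' i (x, th)) ->
  simple_section E a D n th x <= simple_section E a D' n th x.
Proof.
move=> DD'; rewrite lee_fin; apply: ler_wpM2r => //.
by apply: ler_sum => i _; apply: ler_wpM2l => //; apply: le_indic_at; exact: DD'.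
Qed.

Lemma simple_section_le_indic D th x (c : R) : (\sum_(i < n) a i <= c)%R ->
  simple_section E a D n th x <= c%:E * eindic E x.
Proof.
move=> sum_le; rewrite /eindic -EFinM lee_fin; apply: ler_wpM2r => //.
apply: le_trans sum_le; apply: ler_sum => i _.
by rewrite ler_piMr // indic_le1.
Qed.

Lemma simple_section_eq D D' th x : (forall i, D i (x, th) <-> D' i (x, th)) ->
  simple_section E a D n th x = simple_section E a D' n th x.
Proof. by move=> DD'; apply/eqP; rewrite eq_le !simple_section_le // => i /DD'. Qed.

Lemma cvg_simple_section_update k D (F : (set (Omega * Theta))^nat) X th x :
  (\forall m \near \oo, F m (x, th) <-> X (x, th)) ->
  simple_section E a [eta D with k |-> F m] n th x @[m --> \oo] -->
  simple_section E a [eta D with k |-> X] n th x.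
Proof.
move=> FX; apply: cvg_near_cst; apply: filterS FX => m FmX.
by apply: simple_section_eq => i /=; case: ifP.
Qed.

Lemma measurable_fun_rho_simple_section_patterned D :
  (forall i, (i < n)%N -> patterned (D i)) ->
  measurable_fun setT (fun th => rho (simple_section E a D n th)).
Proof.
move=> pD; have [Bs [h [mBs hE]]] := sum_indic_patterned a pD.
rewrite (_ : (fun th => _) = (fun p => rho (fun x => (h p x * \1_E x)%:E)) \o pattern Bs).
  exact: measurable_fun_pattern.
by apply/funext => th /=; congr rho; apply/funext => x; rewrite /simple_section hE.
Qed.

Lemma measurable_fun_rho_simple_section_bigcup k D (F : (set (Omega * Theta))^nat) :
  (forall i, <<sr patterned>> (D i)) ->
  nondecreasing_seq F -> (forall m, <<sr patterned>> (F m)) ->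
  (forall m, measurable_fun setT
    (fun th => rho (simple_section E a [eta D with k |-> F m] n th))) ->
  measurable_fun setT
    (fun th => rho (simple_section E a [eta D with k |-> \bigcup_m F m] n th)).
Proof.
move=> srD ndF srF mF.
apply: (emeasurable_fun_cvg
  (fun m th => rho (simple_section E a [eta D with k |-> F m] n th))) => // th _.
have srU : <<sr patterned>> (\bigcup_m F m) by exact: (g_sigma_ring_monotone _).1.
apply: (cvg_rho_nondecreasing rho_qn rho_fatou).
- by move=> m; apply: L0p_simple_section => i /=; case: ifP.
- by apply: L0p_simple_section => i /=; case: ifP.
- move=> x m m' mm'; apply: simple_section_le => i /=; case: ifP => // _.
  exact/subsetPset/ndF.
- by move=> x; apply: cvg_simple_section_update; exact: near_nondecreasing_bigcup.
Qed.

Lemma measurable_fun_rho_simple_section_bigcap k D (F : (set (Omega * Theta))^nat) :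
  (forall i, <<sr patterned>> (D i)) ->
  nonincreasing_seq F -> (forall m, <<sr patterned>> (F m)) ->
  (forall m, measurable_fun setT
    (fun th => rho (simple_section E a [eta D with k |-> F m] n th))) ->
  measurable_fun setT
    (fun th => rho (simple_section E a [eta D with k |-> \bigcap_m F m] n th)).
Proof.
move=> srD niF srF mF.
apply: (emeasurable_fun_cvg
  (fun m th => rho (simple_section E a [eta D with k |-> F m] n th))) => // th _.
have srI : <<sr patterned>> (\bigcap_m F m) by exact: (g_sigma_ring_monotone _).2.
have c_gt0 : (0 < 1 + \sum_(i < n) a i)%R by rewrite ltr_pwDl ?sumr_ge0.
apply: (cvg_rho_nonincreasing rho_qn rho_ac mE muE c_gt0).
- by move=> m; apply: L0p_simple_section => i /=; case: ifP.
- by apply: L0p_simple_section => i /=; case: ifP.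
- move=> x m m' mm'; apply: simple_section_le => i /=; case: ifP => // _.
  exact/subsetPset/niF.
- by move=> x; apply: simple_section_le_indic; rewrite lerDr.
- by move=> x; apply: cvg_simple_section_update; exact: near_nonincreasing_bigcap.
Qed.

Lemma measurable_fun_rho_simple_section D : (forall i, <<sr patterned>> (D i)) ->
  measurable_fun setT (fun th => rho (simple_section E a D n th)).
Proof.
(* Induction on [k]: the slots [i < k] hold arbitrary sets, the others
   patterned ones; freeing slot [k] is a monotone class argument. *)
suff ind k D' : (forall i, <<sr patterned>> (D' i)) ->
    (forall i, (k <= i < n)%N -> patterned (D' i)) ->
    measurable_fun setT (fun th => rho (simple_section E a D' n th)).
  by move=> srD; apply: (ind n) => // i /andP[/leq_ltn_trans/[apply]]; rewrite ltnn.
elim: k D' => [|k IH] D' srD pD.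
  by apply: measurable_fun_rho_simple_section_patterned => i; exact: pD.
pose M := [set X | <<sr patterned>> X /\ measurable_fun setT
  (fun th => rho (simple_section E a [eta D' with k |-> X] n th))].
have patterned_M : patterned `<=` M.
  move=> X pX; split; first exact: sub_g_sigma_ring.
  apply: IH => i /=; case: ifP => [_|/negbT ik] //; first exact: sub_g_sigma_ring.
  by move=> /andP[ki ilt]; apply: pD; rewrite ilt andbT ltn_neqAle eq_sym ik.
have monotone_M : monotone M.
  split=> F monoF MF; split.
  - by apply: (g_sigma_ring_monotone _).1 => // m; exact: (MF m).1.
  - apply: measurable_fun_rho_simple_section_bigcup => // m.
      exact: (MF m).1.
    exact: (MF m).2.
  - by apply: (g_sigma_ring_monotone _).2 => // m; exact: (MF m).1.
  - apply: measurable_fun_rho_simple_section_bigcap => // m.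
      exact: (MF m).1.
    exact: (MF m).2.
have [_ mD'] :=
  monotone_setring_sub_g_sigma_ring monotone_M patterned_setring patterned_M (srD k).
apply: eq_measurable_fun mD' => th _; congr rho; apply/funext => x.
by apply: simple_section_eq => i /=; case: eqP => // ->.
Qed.

End simple_sections.

Lemma measurable_fun_rho_section (R : realType)
    (d1 : measure_display) (Omega : measurableType d1)
    (mu : {measure set Omega -> \bar R})
    (d2 : measure_display) (Theta : measurableType d2)
    (rho : (Omega -> \bar R) -> \bar R) (f : Omega * Theta -> \bar R) :
  sigma_finite setT mu ->
  is_function_quasinorm mu rho -> has_Fatou rho -> loc_abs_cont mu rho ->
  measurable_fun setT f -> (forall z, 0 <= f z) ->
  measurable_fun setT (fun th => rho (fun x => f (x, th))).
Proof.
move=> /sigma_finiteP[En [EnT ndEn mEn]] rho_qn rho_fatou rho_ac mf f0.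
pose phi := nnsfun_approx measurableT mf.
pose s N := finmap.enum_fset (fset_set (range (phi N))).
pose level N i := phi N @^-1` [set (s N)`_i].
have phiE N th x : (phi N (x, th) * \1_(En N) x)%:E =
    simple_section (En N) (fun i => (s N)`_i) (level N) (size (s N)) th x.
  by rewrite /simple_section (fimfunEord (phi N)).
have s_ge0 N i : (0 <= (s N)`_i)%R.
  have [lt|ge] := ltnP i (size (s N)); last by rewrite nth_default.
  have := mem_nth 0%R lt; rewrite in_fset_set; last exact: fimfunP.
  by rewrite inE => -[z _ <-]; exact: fun_ge0.
have sr_level N i : <<sr patterned>> (level N i).
  apply: measurable_sub_sigma_ring_patterned; rewrite -[X in measurable X]setTI.
  by apply: (measurable_funP (phi N)) => //; exact: measurable_set1.
apply: (emeasurable_fun_cvg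
  (fun N th => rho (fun x => (phi N (x, th) * \1_(En N) x)%:E))) => [N|th _].
  apply: eq_measurable_fun (measurable_fun_rho_simple_section rho_qn rho_fatou rho_ac
    (size (s N)) (mEn N).1 (mEn N).2 (s_ge0 N) (sr_level N)) => th _.
  by congr rho; apply/funext => x; rewrite phiE.
apply: (cvg_rho_nondecreasing rho_qn rho_fatou).
- move=> N; rewrite (funext (phiE N th)).
  by apply: (L0p_simple_section _ (mEn N).1 (s_ge0 N)); exact: sr_level.
- by split=> [|x]; [exact: (measurable_fun_pair1 th mf)|exact: f0].
- move=> x N N' NN'; rewrite lee_fin; apply: ler_pM.
  + exact: fun_ge0.
  + by rewrite indicE.
  + by have /lefP := nd_nnsfun_approx measurableT mf NN'; apply.
  + by apply: le_indic_at; apply/subsetPset: x; exact: ndEn.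
- move=> x; have [j _ Ejx] : (\bigcup_j En j) x by rewrite -EnT.
  apply: cvg_trans (cvg_nnsfun_approx measurableT mf (fun z _ => f0 z) I).
  apply: near_eq_cvg; near=> N; rewrite /= indicE mem_set ?mulr1 //.
  by apply/subsetPset: Ejx; apply: ndEn; near: N; exists j.
Unshelve. all: by end_near.
Qed.

Theorem proposition3p38 (R : realType)
  (d1 : measure_display) (Omega : measurableType d1)
  (mu : {measure set Omega -> \bar R})
  (d2 : measure_display) (Theta : measurableType d2)
  (nu : {measure set Theta -> \bar R})
  (rho : (Omega -> \bar R) -> \bar R)
  (f : Omega * Theta -> \bar R) (g : Theta * Omega -> \bar R) :
  sigma_finite setT mu -> sigma_finite setT nu ->
  is_function_quasinorm mu rho -> has_Fatou rho -> loc_abs_cont mu rho ->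
  measurable_fun setT f -> (forall z, 0 <= f z) ->
  measurable_fun setT g -> (forall z, 0 <= g z) ->
  measurable_fun setT (fun theta : Theta => rho (fun omega => f (omega, theta))) /\
  measurable_fun setT (fun theta : Theta => rho (fun omega => g (theta, omega))).
Proof.
move=> mu_sfin _ rho_qn rho_fatou rho_ac mf f0 mg g0; split.
  exact: measurable_fun_rho_section mu_sfin rho_qn rho_fatou rho_ac mf f0.
have mg_swap : measurable_fun setT (fun z : Omega * Theta => g (z.2, z.1)) :=
  measurableT_comp mg (@measurable_swap _ _ Omega Theta).
exact: measurable_fun_rho_section mu_sfin rho_qn rho_fatou rho_ac mg_swap (fun z => g0 _).
Qed.
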